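(* Let $k\geq 2$ be an integer. For integers $n\ge 0$ and $t\ge 0$ let $\mathrm{IB}_k(n,t)$ be the number of length-$n$ words over $\Sigma_k$ whose largest BP-factorization has width $t$. Then $\mathrm{IB}_k(0,0)=1$, and for every integer $n\geq 1$ we have $\mathrm{IB}_k(2n,2)=u_n$ and $\mathrm{IB}_k(n,1)=u_n$. Moreover, for all integers $n\geq 0$ and $t\geq 3$, \[ \mathrm{IB}_k(n,t)=\begin{cases} \sum_{i=1}^{(n-t)/2+1} u_{i}\, \mathrm{IB}_k(n-2i, t-2), & \text{if $n$, $t$ are both even;}\\ \sum_{i=1}^{(n-t+1)/2} u_{2i}\, \mathrm{IB}_k(n-2i,t-1), & \text{if $n$ is even and $t$ is odd;}\\ 0, & \text{if $n$ is odd and $t$ is even;}\\ \sum_{i=1}^{(n-t)/2+1}u_{2i-1}\,\mathrm{IB}_k(n-2i+1,t-1), & \text{if $n$, $t$ are both odd,} \end{cases} \] where a sum whose upper limit is less than $1$ is zero.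
   Context: $\Sigma_k=\{0,1,\ldots,k-1\}$. A border of a word $w$ is a non-empty word that is both a proper prefix and a proper suffix of $w$; $w$ is unbordered if it has no border (the empty word counts as unbordered). $u_n$ denotes the number of unbordered words of length $n$ over $\Sigma_k$; it satisfies $u_0=1$, $u_n=ku_{n-1}-u_{n/2}$ for even $n>0$, and $u_n=ku_{n-1}$ for odd $n$. A block palindrome factorization (BP-factorization) of a word $w$ is a factorization $w=w_m\cdots w_1w_0w_1\cdots w_m$ with $m\ge 0$, $w_0$ a possibly empty word and $w_1,\dots,w_m$ non-empty words. Its width is $2m+1$ if $w_0$ is non-empty and $2m$ if $w_0$ is empty (i.e., the number of non-empty blocks). A largest BP-factorization of $w$ is a BP-factorization of $w$ of maximum width; the width of the largest BP-factorization of $w$ is this maximum. *)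

From mathcomp Require Import all_boot.
From mathcomp Require Import boolp.
Set Implicit Arguments. Unset Strict Implicit. Unset Printing Implicit Defensive.

(* Words over Sigma_k = {0,...,k-1} are sequences over 'I_k. *)

(* w is unbordered: no non-empty proper prefix equals the suffix of the same length.
   (The empty word is unbordered.) *)
Definition unbordered (T : eqType) (w : seq T) : bool :=
  all (fun i => take i w != drop (size w - i) w) (iota 1 (size w).-1).

Definition u (k n : nat) : nat :=
  #|[set w : n.-tuple 'I_k | unbordered (val w)]|.

(* BP-factorization w = w_m ... w_1 w_0 w_1 ... w_m, with blocks = [:: w_1; ...; w_m]
   all non-empty, and w0 possibly empty. *)
Definition is_BPfact (T : eqType) (w : seq T) (blocks : seq (seq T)) (w0 : seq T) : Prop :=
  all (fun b => b != [::]) blocks /\ w = flatten (rev blocks) ++ w0 ++ flatten blocks.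

(* width = number of non-empty blocks *)
Definition BPwidth (T : eqType) (blocks : seq (seq T)) (w0 : seq T) : nat :=
  2 * size blocks + (w0 != [::]).

Definition largest_BPwidth (T : eqType) (w : seq T) (t : nat) : Prop :=
  (exists blocks w0, is_BPfact w blocks w0 /\ BPwidth blocks w0 = t) /\
  (forall blocks w0, is_BPfact w blocks w0 -> BPwidth blocks w0 <= t).

Definition IB (k n t : nat) : nat :=
  #|[set w : n.-tuple 'I_k | `[< largest_BPwidth (val w) t >]]|.

From mathcomp Require Import all_boot.
From mathcomp Require Import boolp zify.
Set Implicit Arguments. Unset Strict Implicit. Unset Printing Implicit Defensive.

(* Peeling off the shortest border is optimal.  If v is the shortest border of a
   bordered word w, then w = v M v with v unbordered, and any outer block x of a
   BP-factorization of v M v is either v itself or of the form v z v; in the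
   latter case M = z v N v z has a factorization at least as wide as the inner
   part N.  Hence the largest width of v M v is two more than that of M, and an
   unbordered word has width 0 or 1.  Consequently a word of even width t >= 2 is
   the same as a pair (unbordered v, word of width t - 2), and a word of odd width
   t is the same as a pair (unbordered centre c, word of width t - 1 with c
   inserted in its middle), the centre being recovered by peeling (t - 1)/2 times.
   Counting these pairs by |v|, resp. |c|, gives the recurrences. *)

Lemma find_iota0 (p : pred nat) n i : i < n -> p i -> (forall j, j < i -> ~~ p j) ->
  find p (iota 0 n) = i.
Proof.
move=> hi pi hj.
have hp : has p (iota 0 n) by apply/hasP; exists i => //; rewrite mem_iota.
have hf : find p (iota 0 n) < n by move: hp; rewrite has_find size_iota.
have := nth_find 0 hp; rewrite nth_iota // add0n => pf.
case: (ltngtP (find p (iota 0 n)) i) => // h.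
- by move: (hj _ h); rewrite pf.
- by have := before_find 0 h; rewrite nth_iota // add0n pi.
Qed.

Section Borders.
Variable T : eqType.
Implicit Types (w v x y z m n : seq T).

Definition is_border w j := take j w == drop (size w - j) w.

Lemma unborderedP w :
  reflect (forall j, 0 < j < size w -> ~~ is_border w j) (unbordered w).
Proof.
apply: (iffP allP) => H j.
- by move=> hj; apply: H; rewrite mem_iota; lia.
- by rewrite mem_iota => hj; apply: H; lia.
Qed.

Lemma unbordered_no_border w j : unbordered w -> 0 < j < size w -> is_border w j = false.
Proof. by move/unborderedP => H /H /negbTE. Qed.

Lemma is_border_size w : is_border w (size w).
Proof. by rewrite /is_border take_size subnn drop0. Qed.

Lemma is_border_sandwich x m j : j <= size x ->
  is_border (x ++ m ++ x) j = is_border x j.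
Proof.
move=> hj; rewrite /is_border takel_cat // catA drop_cat !size_cat.
case: ifP => [|_]; first lia.
by have -> : size x + size m + size x - j - (size x + size m) = size x - j by lia.
Qed.

Lemma is_border_take w i j : is_border w j -> i <= j <= size w ->
  is_border (take j w) i = is_border w i.
Proof.
move=> /eqP bj hij; rewrite /is_border size_takel; last lia.
rewrite take_takel; last lia.
rewrite bj drop_drop.
by have -> : j - i + (size w - j) = size w - i by lia.
Qed.

(* Two overlapping copies of the border give it a period, hence a border of length 2j - |w|. *)
Lemma is_border_overlap w j : is_border w j -> j < size w < 2 * j ->
  ~~ unbordered (take j w).
Proof.
move=> /eqP bj hj; apply/unborderedP => /(_ (2 * j - size w)).
rewrite size_takel; last lia.
move=> /(_ _)/negP; apply; first lia.
rewrite /is_border size_takel; last lia.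
have -> : j - (2 * j - size w) = size w - j by lia.
rewrite {1}bj take_drop.
by have -> : 2 * j - size w + (size w - j) = j by lia.
Qed.

Lemma is_border_split w j : is_border w j -> 2 * j <= size w ->
  w = take j w ++ drop j (take (size w - j) w) ++ take j w.
Proof.
move=> /eqP bj hj.
rewrite {2}bj -{1}(@take_takel _ j (size w - j) w); last lia.
by rewrite catA !cat_take_drop.
Qed.

Lemma unbordered_border_sandwich w j : unbordered (take j w) -> is_border w j ->
  0 < j < size w -> exists m, w = take j w ++ m ++ take j w.
Proof.
move=> ub bj hj; exists (drop j (take (size w - j) w)).
apply: is_border_split => //; rewrite leqNgt; apply: contraL ub => h.
by apply: is_border_overlap; lia.
Qed.

Lemma bordered_sandwich w : ~~ unbordered w ->
  exists v m, [/\ w = v ++ m ++ v, unbordered v & 0 < size v].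
Proof.
move/unborderedP => nub.
have ex : exists j, (0 < j < size w) && is_border w j.
  apply: contra_notP nub => nex j hj; apply/negP => bj; apply: nex.
  by exists j; rewrite hj bj.
case: (ex_minnP ex) => j /andP [hj bj] jmin.
have ubv : unbordered (take j w).
  apply/unborderedP => i; rewrite size_takel; last lia.
  move=> hi; rewrite is_border_take //; last lia.
  apply/negP => bi; have /jmin : (0 < i < size w) && is_border w i by rewrite bi; lia.
  lia.
have [m ew] := unbordered_border_sandwich ubv bj hj.
by exists (take j w), m; split => //; rewrite size_takel; lia.
Qed.

Lemma sandwich_inj v : injective (fun m => v ++ m ++ v).
Proof.
move=> m n /= /(congr1 (drop (size v))); rewrite !drop_size_cat // => e.
have smn : size m = size n by move/(congr1 size): e; rewrite !size_cat; lia.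
by rewrite -(take_size_cat v smn) e take_size_cat.
Qed.

Lemma sandwich_outer_block v m x n : unbordered v -> 0 < size v -> 0 < size x ->
  v ++ m ++ v = x ++ n ++ x ->
  n = m \/ exists2 z, x = v ++ z ++ v & m = z ++ v ++ n ++ v ++ z.
Proof.
move=> ub sv sx e; case: (ltngtP (size x) (size v)) => hxv.
- have : is_border v (size x).
    by rewrite -(is_border_sandwich m) 1?ltnW // e is_border_sandwich // is_border_size.
  by rewrite unbordered_no_border //; lia.
- have vx : take (size v) x = v.
    by move/(congr1 (take (size v))): e; rewrite take_size_cat // takel_cat // ltnW.
  have [z ex] : exists z, x = v ++ z ++ v.
    rewrite -vx; apply: unbordered_border_sandwich; rewrite ?vx //; last lia.
    by rewrite -(is_border_sandwich n) 1?ltnW // -e is_border_sandwich // is_border_size.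
  right; exists z => //.
  by apply: (@sandwich_inj v); rewrite /= e ex -!catA.
- have vx : v = x.
    by move/(congr1 (take (size v))): e; rewrite take_size_cat // -hxv take_size_cat.
  by left; apply: (@sandwich_inj v); rewrite /= e vx.
Qed.

Lemma cat_sandwich_halves x y v n : x ++ y = v ++ n ++ v -> size x = size y ->
  exists x' y', [/\ x = v ++ x', y = y' ++ v & n = x' ++ y'].
Proof.
move=> e sxy; have sizes : size x + size y = 2 * size v + size n.
  by move/(congr1 size): e; rewrite !size_cat; lia.
exists (take (size x - size v) n), (drop (size x - size v) n).
have sx : size x = size (v ++ take (size x - size v) n).
  by rewrite size_cat size_takel; lia.
rewrite cat_take_drop; move: e; rewrite -{1}(cat_take_drop (size x - size v) n).
by rewrite -!catA catA => /eqP; rewrite eqseq_cat // => /andP[/eqP ? /eqP ?].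
Qed.

Definition border_len w := find (fun j => (0 < j) && is_border w j) (iota 0 (size w)).

Definition inner w := drop (border_len w) (take (size w - border_len w) w).

Lemma border_len_sandwich v m : unbordered v -> 0 < size v ->
  border_len (v ++ m ++ v) = size v.
Proof.
move=> ub sv; apply: find_iota0.
- by rewrite !size_cat; lia.
- by rewrite sv is_border_sandwich // is_border_size.
- move=> j hj; rewrite is_border_sandwich; last lia.
  by case: (posnP j) => [->|j0] //; rewrite unbordered_no_border //; lia.
Qed.

Lemma inner_sandwich v m : unbordered v -> 0 < size v -> inner (v ++ m ++ v) = m.
Proof.
move=> ub sv; rewrite /inner border_len_sandwich //.
have -> : size (v ++ m ++ v) - size v = size (v ++ m) by rewrite !size_cat; lia.
by rewrite catA take_size_cat // drop_size_cat.
Qed.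

End Borders.

Arguments inner {T} w.

Section Factorizations.
Variable T : eqType.
Implicit Types (w v x y z m n : seq T) (bs : seq (seq T)).

Definition BPword bs w0 := flatten (rev bs) ++ w0 ++ flatten bs.

Lemma BPword_rcons bs x w0 : BPword (rcons bs x) w0 = x ++ BPword bs w0 ++ x.
Proof. by rewrite /BPword rev_rcons /= flatten_rcons -!catA. Qed.

Lemma BPwidth_rcons bs x w0 : BPwidth (rcons bs x) w0 = (BPwidth bs w0).+2.
Proof. by rewrite /BPwidth size_rcons; lia. Qed.

Lemma is_BPfact_rcons w bs x w0 : is_BPfact w (rcons bs x) w0 <->
  [/\ x != [::], is_BPfact (BPword bs w0) bs w0 & w = x ++ BPword bs w0 ++ x].
Proof.
rewrite /is_BPfact all_rcons -/(BPword _ _) -/(BPword _ _) BPword_rcons; split.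
- by case=> /andP [-> ->] ->.
- by case=> -> [-> _] ->.
Qed.

Lemma is_BPfact_trivial w : is_BPfact w [::] w.
Proof. by rewrite /is_BPfact /= cats0. Qed.

Lemma BPwidth_le_size w bs w0 : is_BPfact w bs w0 -> BPwidth bs w0 <= size w.
Proof.
case=> nz ->; have : size bs <= sumn (shape bs).
  by elim: bs nz => //= b bs IH /andP [nb /IH]; case: b nb => //= *; lia.
rewrite /BPwidth !size_cat !size_flatten /shape map_rev sumn_rev.
by case: w0 => [|a w0] /=; lia.
Qed.

Lemma BPwidth_even_size w bs w0 : is_BPfact w bs w0 -> ~~ odd (BPwidth bs w0) ->
  ~~ odd (size w).
Proof.
case=> _ ->; rewrite /BPwidth !size_cat !size_flatten /shape map_rev sumn_rev.
by case: w0 => [|a w0] /=; rewrite ?addn0 ?addn1 ?odd_mul //=; lia.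
Qed.

Lemma is_BPfact_wrap n bs w0 z v : is_BPfact n bs w0 -> v != [::] ->
  exists bs', is_BPfact (z ++ v ++ n ++ v ++ z) bs' w0 /\ (BPwidth bs w0).+2 <= BPwidth bs' w0.
Proof.
move=> fn nv; have en : n = BPword bs w0 := fn.2.
rewrite en in fn *; case: z => [|a z].
  exists (rcons bs v); rewrite BPwidth_rcons cats0; split => //.
  by apply/is_BPfact_rcons.
exists (rcons (rcons bs v) (a :: z)); rewrite !BPwidth_rcons; split; last lia.
apply/is_BPfact_rcons; split=> //; first by apply/is_BPfact_rcons; rewrite BPword_rcons.
by rewrite BPword_rcons -!catA.
Qed.

Lemma largest_BPwidth_functional w t t' :
  largest_BPwidth w t -> largest_BPwidth w t' -> t = t'.
Proof.
case=> [[bs [w0 [f <-]]] H] [[bs' [w0' [f' <-]]] H'].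
by apply/eqP; rewrite eqn_leq H // H'.
Qed.

Lemma largest_BPwidth_le_size w t : largest_BPwidth w t -> t <= size w.
Proof. by case=> [[bs [w0 [f <-]]] _]; exact: BPwidth_le_size. Qed.

Lemma largest_BPwidth_even_size w t : largest_BPwidth w t -> ~~ odd t -> ~~ odd (size w).
Proof. by case=> [[bs [w0 [f <-]]] _]; exact: BPwidth_even_size. Qed.

Lemma largest_BPwidth0 w : largest_BPwidth w 0 -> w = [::].
Proof.
by case=> _ /(_ [::] w (is_BPfact_trivial w)); rewrite /BPwidth; case: w.
Qed.

Lemma largest_BPwidth_unbordered w : unbordered w -> largest_BPwidth w (w != [::]).
Proof.
move=> ub; split; first by exists [::], w; split; first exact: is_BPfact_trivial.
case/lastP => [|bs x] w0.
  by case=> _; rewrite /= cats0 => ->.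
case/is_BPfact_rcons => nx _ e.
have sx : 0 < size x by rewrite lt0n size_eq0.
suff : 0 < size x < size w.
  by move/(unbordered_no_border ub); rewrite e is_border_sandwich // is_border_size.
by rewrite e !size_cat; lia.
Qed.

Lemma largest_BPwidth_sandwich v m t : unbordered v -> 0 < size v ->
  largest_BPwidth m t -> largest_BPwidth (v ++ m ++ v) t.+2.
Proof.
move=> ub sv [[bs [w0 [fm <-]]] maxm].
have nv : v != [::] by rewrite -size_eq0 -lt0n.
split.
  exists (rcons bs v), w0; rewrite BPwidth_rcons; split => //.
  have em : m = BPword bs w0 := fm.2.
  by apply/is_BPfact_rcons; rewrite -em.
case/lastP => [|bs' x] w1.
  by move=> _; rewrite /BPwidth /=; case: (w1 != [::]).
case/is_BPfact_rcons => nx fn e; rewrite BPwidth_rcons ltnS ltnS.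
have sx : 0 < size x by rewrite lt0n size_eq0.
have [en|[z _ ez]] := sandwich_outer_block ub sv sx e.
  by apply: maxm; rewrite -en.
have [bs'' [f'' le'']] := is_BPfact_wrap z fn nv.
by rewrite -ez in f''; have := maxm _ _ f''; lia.
Qed.

Lemma largest_BPwidth_exists w : exists t, largest_BPwidth w t.
Proof.
elim: {w}(size w).+1 {-2}w (ltnSn (size w)) => // N IH w hw.
have [ub|/bordered_sandwich [v [m [e ubv sv]]]] := boolP (unbordered w).
  by exists (w != [::]); exact: largest_BPwidth_unbordered.
have [|t ht] := IH m; first by move: hw; rewrite e !size_cat; lia.
by exists t.+2; rewrite e; exact: largest_BPwidth_sandwich.
Qed.

Lemma largest_BPwidth_sandwichK v m t : unbordered v -> 0 < size v ->
  largest_BPwidth (v ++ m ++ v) t.+2 -> largest_BPwidth m t.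
Proof.
move=> ub sv h; have [t' h'] := largest_BPwidth_exists m.
by have := largest_BPwidth_functional h (largest_BPwidth_sandwich ub sv h') => -[->].
Qed.

Lemma largest_BPwidth_ge2 w t : largest_BPwidth w t -> (2 <= t) = ~~ unbordered w.
Proof.
move=> h; have [ub|/bordered_sandwich [v [m [e ubv sv]]]] := boolP (unbordered w).
  by rewrite (largest_BPwidth_functional h (largest_BPwidth_unbordered ub)); case: eqP.
have [t' h'] := largest_BPwidth_exists m.
by rewrite (largest_BPwidth_functional h (_ : largest_BPwidth w t'.+2)) // e;
  exact: largest_BPwidth_sandwich.
Qed.

Lemma largest_BPwidth_bordered w t : largest_BPwidth w t -> 2 <= t ->
  exists v m, [/\ w = v ++ m ++ v, unbordered v, 0 < size v & largest_BPwidth m (t - 2)].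
Proof.
move=> h ht; move: (ht); rewrite (largest_BPwidth_ge2 h).
case/bordered_sandwich => v [m [e ubv sv]]; exists v, m; split => //.
apply: (largest_BPwidth_sandwichK ubv sv).
by rewrite -e; have -> : (t - 2).+2 = t by lia.
Qed.

Lemma border_len_bounds w t : largest_BPwidth w t -> 2 <= t ->
  0 < border_len w /\ 2 * border_len w + t <= size w + 2.
Proof.
move=> hw ht; have [v [m [e ubv sv hm]]] := largest_BPwidth_bordered hw ht.
by have := largest_BPwidth_le_size hm; rewrite e border_len_sandwich // !size_cat; lia.
Qed.

End Factorizations.

Section Centers.
Variable T : eqType.
Implicit Types (w x y c : seq T).

Lemma largest_BPwidth_insert_center m x y c :
  largest_BPwidth (x ++ y) (2 * m) -> size x = size y -> unbordered c -> 0 < size c ->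
  largest_BPwidth (x ++ c ++ y) (2 * m + 1) /\ iter m inner (x ++ c ++ y) = c.
Proof.
move=> + + ubc sc; elim: m x y => [|m IH] x y hxy sxy.
  move/largest_BPwidth0: hxy; case: x y {sxy} => [|? ?] [|? ?] //= _.
  by rewrite cats0; have := largest_BPwidth_unbordered ubc; rewrite -size_eq0 -lt0n sc.
have [v [n [e ubv sv hn]]] := largest_BPwidth_bordered hxy ltac:(lia).
have [x' [y' [ex ey en]]] := cat_sandwich_halves e sxy.
have sxy' : size x' = size y' by move: sxy; rewrite ex ey !size_cat; lia.
have hn' : largest_BPwidth (x' ++ y') (2 * m).
  by rewrite -en; have -> : 2 * m = 2 * m.+1 - 2 by lia.
have [IH1 IH2] := IH x' y' hn' sxy'.
have -> : x ++ c ++ y = v ++ (x' ++ c ++ y') ++ v by rewrite ex ey -!catA.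
split; last by rewrite iterSr inner_sandwich.
have -> : 2 * m.+1 + 1 = (2 * m + 1).+2 by lia.
exact: largest_BPwidth_sandwich.
Qed.

Lemma largest_BPwidth_odd m w : largest_BPwidth w (2 * m + 1) ->
  exists x y c, [/\ w = x ++ c ++ y, size x = size y, unbordered c, 0 < size c
                  & largest_BPwidth (x ++ y) (2 * m)].
Proof.
elim: m w => [|m IH] w hw.
  have ubw : unbordered w by rewrite -[unbordered w]negbK -(largest_BPwidth_ge2 hw).
  exists [::], [::], w; split; rewrite ?cats0 //.
    have := largest_BPwidth_functional hw (largest_BPwidth_unbordered ubw).
    by case: w {hw ubw}.
  exact: (largest_BPwidth_unbordered (w := [::])).
have [v [n [e ubv sv hn]]] := largest_BPwidth_bordered hw ltac:(lia).
have [|x [y [c [en sxy ubc sc hxy]]]] := IH n.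
  by have -> : 2 * m + 1 = 2 * m.+1 + 1 - 2 by lia.
exists (v ++ x), (y ++ v), c; split => //.
- by rewrite e en -!catA.
- by rewrite !size_cat sxy addnC.
have -> : (v ++ x) ++ y ++ v = v ++ (x ++ y) ++ v by rewrite -!catA.
have -> : 2 * m.+1 = (2 * m).+2 by lia.
exact: largest_BPwidth_sandwich.
Qed.

Lemma largest_BPwidth_odd_center m w : largest_BPwidth w (2 * m + 1) ->
  exists x y, [/\ w = x ++ iter m inner w ++ y, size x = size y,
    unbordered (iter m inner w), 0 < size (iter m inner w)
    & largest_BPwidth (x ++ y) (2 * m)].
Proof.
case/largest_BPwidth_odd => x [y [c [e sxy ubc sc hxy]]].
have [_ ec] := largest_BPwidth_insert_center hxy sxy ubc sc.
by exists x, y; rewrite e ec.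
Qed.

Lemma center_size_bounds m w : largest_BPwidth w (2 * m + 1) ->
  [/\ 0 < size (iter m inner w), 2 * m + size (iter m inner w) <= size w
     & ~~ odd (size w - size (iter m inner w))].
Proof.
case/largest_BPwidth_odd_center => x [y []].
set c := iter m inner w => e sxy _ sc hxy.
have sw : size w = size x + size c + size y by rewrite {1}e !size_cat addnA.
have := largest_BPwidth_le_size hxy; rewrite size_cat -sxy => hx.
by split => //; [lia | rewrite (_ : size w - size c = (size x).*2) ?odd_double //; lia].
Qed.

End Centers.

Lemma card_partition_nat (T : finType) (R : pred T) (f : T -> nat) a b :
  (forall x, R x -> a <= f x < b) ->
  #|[set x | R x]| = \sum_(a <= i < b) #|[set x | R x && (f x == i)]|.
Proof.
move=> hf; rewrite cardsE -sum1_card.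
under [RHS]eq_bigr => i _ do rewrite cardsE -sum1_card.
rewrite (exchange_big_dep R) /=; last by move=> i x _ /andP[].
apply: eq_bigr => x /[1!unfold_in] Rx; rewrite sum1_count.
rewrite (eq_count (a2 := pred1 (f x))) => [|i]; last by rewrite unfold_in /= Rx eq_sym.
by rewrite count_uniq_mem ?iota_uniq // mem_iota subnKC; have := hf x Rx; lia.
Qed.

Lemma card_tuple_prod (T : finType) a b n (g : seq T -> seq T -> seq T)
    (pa pb : seq T -> seq T) (P Q R : pred (seq T)) :
  (forall x y, size x = a -> size y = b -> size (g x y) = n) ->
  (forall x y, size x = a -> size y = b -> P x -> Q y -> pa (g x y) = x /\ pb (g x y) = y) ->
  (forall x y, size x = a -> size y = b -> P x -> Q y -> R (g x y)) ->
  (forall w, size w = n -> R w ->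
     [/\ P (pa w), Q (pb w), size (pa w) = a, size (pb w) = b & w = g (pa w) (pb w)]) ->
  #|[set w : n.-tuple T | R (val w)]| =
  #|[set x : a.-tuple T | P (val x)]| * #|[set y : b.-tuple T | Q (val y)]|.
Proof.
move=> gsize gK gR Rg.
have gP (x : a.-tuple T) (y : b.-tuple T) : size (g x y) == n by rewrite gsize ?size_tuple.
pose f (p : a.-tuple T * b.-tuple T) : n.-tuple T := Tuple (gP p.1 p.2).
rewrite -cardsX -(card_in_imset (f := f)).
  apply: eq_card => w; rewrite inE; apply/idP/imsetP.
  - move=> Rw; have [Pa Qb sa sb ew] := Rg w (size_tuple w) Rw.
    have sa' : size (pa w) == a by apply/eqP.
    have sb' : size (pb w) == b by apply/eqP.
    by exists (Tuple sa', Tuple sb'); [rewrite !inE /= Pa Qb | apply: val_inj].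
  - by case=> -[x y]; rewrite !inE /= => /andP [Px Qy] ->; apply: gR; rewrite ?size_tuple.
move=> [x1 y1] [x2 y2]; rewrite !inE /= => /andP [P1 Q1] /andP [P2 Q2] /(congr1 val) /= e.
have [e1 e2] := gK x1 y1 (size_tuple _) (size_tuple _) P1 Q1.
have [e3 e4] := gK x2 y2 (size_tuple _) (size_tuple _) P2 Q2.
by rewrite e e3 in e1; rewrite e e4 in e2; congr (_, _); apply: val_inj.
Qed.

Section Counting.
Variable k : nat.

Lemma IB_width0 n : IB k n 0 = (n == 0).
Proof.
rewrite /IB; case: n => [|n].
  rewrite -[RHS](card_tuple 0 'I_k) -cardsT; apply: eq_card => w; rewrite !inE tuple0.
  by apply/asboolP; exact: (largest_BPwidth_unbordered (w := [::])).
apply: eq_card0 => w; rewrite inE; apply/asboolP => /largest_BPwidth0.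
by move/(congr1 size); rewrite size_tuple.
Qed.

Lemma IB_odd_even n t : odd n -> ~~ odd t -> IB k n t = 0.
Proof.
move=> hn ht; apply: eq_card0 => w; rewrite inE; apply/asboolP => hw.
by have := largest_BPwidth_even_size hw ht; rewrite size_tuple hn.
Qed.

Lemma IB_1 n : 0 < n -> IB k n 1 = u k n.
Proof.
move=> hn; apply: eq_card => w; rewrite !inE; apply/asboolP/idP => [hw|ub].
  by rewrite -[unbordered _]negbK -(largest_BPwidth_ge2 hw).
by have := largest_BPwidth_unbordered ub; rewrite -size_eq0 size_tuple -lt0n hn.
Qed.

Lemma IB_border_count n t i : 2 <= t -> 0 < i -> 2 * i <= n ->
  #|[set w : n.-tuple 'I_k | `[< largest_BPwidth (val w) t >] && (border_len (val w) == i)]|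
  = u k i * IB k (n - 2 * i) (t - 2).
Proof.
move=> ht hi hin; apply: (@card_tuple_prod _ i (n - 2 * i) n (fun x y => x ++ y ++ x)
  (take i) inner (@unbordered _) (fun m => `[< largest_BPwidth m (t - 2) >])
  (fun w => `[< largest_BPwidth w t >] && (border_len w == i))).
- by move=> x y sx sy; rewrite !size_cat sx sy; lia.
- by move=> x y sx _ ubx _; rewrite take_size_cat // inner_sandwich // sx.
- move=> x y sx _ ubx /asboolP hy; rewrite border_len_sandwich ?sx // eqxx andbT.
  apply/asboolP; have -> : t = (t - 2).+2 by lia.
  by apply: largest_BPwidth_sandwich; rewrite ?sx.
move=> w sw /andP [/asboolP hw /eqP hb].
have [v [m [e ubv sv hm]]] := largest_BPwidth_bordered hw ht.
have svi : size v = i by rewrite -hb e border_len_sandwich.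
rewrite e take_size_cat // inner_sandwich //; split => //; first exact/asboolP.
by move: sw; rewrite e !size_cat svi; lia.
Qed.

Lemma IB_border_rec n t : 2 <= t ->
  IB k n t = \sum_(1 <= i < (n + 2 - t)./2.+1) u k i * IB k (n - 2 * i) (t - 2).
Proof.
move=> ht; rewrite {1}/IB (@card_partition_nat _ _
  (fun w : n.-tuple 'I_k => border_len (val w)) 1 (n + 2 - t)./2.+1).
  by apply: eq_big_nat => i hi; rewrite IB_border_count //; lia.
by move=> w /asboolP /border_len_bounds /(_ ht) /=; rewrite size_tuple; lia.
Qed.

Lemma IB_2 n : 0 < n -> IB k (2 * n) 2 = u k n.
Proof.
move=> hn; rewrite IB_border_rec // (_ : (2 * n + 2 - 2)./2 = n); last lia.
rewrite big_nat_recr; last lia.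
rewrite big_nat big1 => [|i /andP [_ hi]]; first by rewrite IB_width0 subnn muln1.
by rewrite IB_width0; case: eqP; [lia | rewrite muln0].
Qed.

Lemma IB_center_count n m j : 0 < j <= n -> ~~ odd (n - j) ->
  #|[set w : n.-tuple 'I_k | `[< largest_BPwidth (val w) (2 * m + 1) >]
                             && (size (iter m inner (val w)) == j)]|
  = u k j * IB k (n - j) (2 * m).
Proof.
move=> hj hnj; pose h := (n - j)./2.
apply: (@card_tuple_prod _ j (n - j) n (fun c y => take h y ++ c ++ drop h y)
  (fun w => drop h (take (h + j) w)) (fun w => take h w ++ drop (h + j) w)
  (@unbordered _) (fun s => `[< largest_BPwidth s (2 * m) >])
  (fun w => `[< largest_BPwidth w (2 * m + 1) >] && (size (iter m inner w) == j))).
- by move=> c y sc sy; rewrite !size_cat size_take size_drop sc sy; case: ifP; lia.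
- move=> c y sc sy _ _.
  have st : size (take h y) = h by rewrite size_takel // sy; lia.
  have -> : h + j = size (take h y ++ c) by rewrite size_cat st sc.
  rewrite catA take_size_cat // drop_size_cat // drop_size_cat //.
  by rewrite -catA take_size_cat // cat_take_drop.
- move=> c y sc sy ubc /asboolP hy.
  have sxy : size (take h y) = size (drop h y).
    by rewrite size_drop size_takel sy; lia.
  have hy' : largest_BPwidth (take h y ++ drop h y) (2 * m) by rewrite cat_take_drop.
  have c0 : 0 < size c by rewrite sc; lia.
  have [lw ->] := largest_BPwidth_insert_center hy' sxy ubc c0.
  by rewrite sc eqxx andbT; apply/asboolP.
move=> w sw /andP [/asboolP hw /eqP hc].
have [x [y [e sxy ubc _ hxy]]] := largest_BPwidth_odd_center hw.
move: e ubc hc; set c := iter m inner w => e ubc hc.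
have sx : size x = h.
  by move: sw sxy; rewrite e !size_cat hc; set a := size x; set b := size y; lia.
have sxc : size (x ++ c) = h + j by rewrite size_cat sx hc.
rewrite e catA (take_size_cat y sxc) (drop_size_cat y sxc) (drop_size_cat c sx).
rewrite -catA (take_size_cat _ sx) (take_size_cat _ sx) (drop_size_cat _ sx).
split => //; first exact/asboolP.
by rewrite size_cat sx -sxy sx; lia.
Qed.

Lemma IB_center_rec n m : IB k n (2 * m + 1) =
  \sum_(1 <= i < (n + odd n - 2 * m)./2.+1)
     u k (2 * i - odd n) * IB k (n - (2 * i - odd n)) (2 * m).
Proof.
rewrite {1}/IB (@card_partition_nat _ _
  (fun w : n.-tuple 'I_k => (size (iter m inner (val w)) + odd n)./2) 1 (n + odd n - 2 * m)./2.+1).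
  apply: eq_big_nat => i hi; rewrite -IB_center_count; [|lia|lia].
  apply: eq_card => w; rewrite !inE; case: (boolP `[< _ >]) => //= /asboolP hw.
  case: (center_size_bounds hw); rewrite size_tuple; set s := size (iter _ _ _).
  by move=> *; apply/eqP/eqP; lia.
by move=> w /asboolP /center_size_bounds [] /=; rewrite size_tuple; lia.
Qed.

End Counting.

Theorem theorem2 (k : nat) (hk : 2 <= k) :
  IB k 0 0 = 1 /\
  (forall n, 1 <= n -> IB k (2 * n) 2 = u k n /\ IB k n 1 = u k n) /\
  (forall n t, 3 <= t ->
     (~~ odd n -> ~~ odd t ->
        IB k n t = \sum_(1 <= i < (n + 2 - t)./2 .+1) u k i * IB k (n - 2 * i) (t - 2)) /\
     (~~ odd n -> odd t ->
        IB k n t = \sum_(1 <= i < (n + 1 - t)./2 .+1) u k (2 * i) * IB k (n - 2 * i) (t - 1)) /\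
     (odd n -> ~~ odd t -> IB k n t = 0) /\
     (odd n -> odd t ->
        IB k n t = \sum_(1 <= i < (n + 2 - t)./2 .+1)
                      u k (2 * i - 1) * IB k (n - 2 * i + 1) (t - 1))).
Proof.
(* The recurrences hold for every alphabet size. *)
split; first by rewrite IB_width0.
split; first by move=> n hn; rewrite IB_2 // IB_1.
move=> n t ht; split; [|split; [|split]].
- by move=> _ _; rewrite IB_border_rec //; lia.
- move=> /negbTE hn ho; have tE : t = 2 * t./2 + 1 by lia.
  rewrite {1}tE IB_center_rec hn /= (_ : n + 0 - 2 * t./2 = n + 1 - t); last lia.
  by apply: eq_big_nat => i _; rewrite subn0 (_ : t - 1 = 2 * t./2) //; lia.
- exact: IB_odd_even.
- move=> hn ho; have tE : t = 2 * t./2 + 1 by lia.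
  rewrite {1}tE IB_center_rec hn /= (_ : n + 1 - 2 * t./2 = n + 2 - t); last lia.
  apply: eq_big_nat => i hi.
  by rewrite (_ : n - (2 * i - 1) = n - 2 * i + 1) 1?(_ : t - 1 = 2 * t./2) //; lia.
Qed.
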